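(* Let $D$ be the diamond graph with $V=\{1,2,3,4\}$, $E=\{\{1,2\},\{1,3\},\{2,3\},\{2,4\},\{3,4\}\}$, and let $\lambda=(\lambda_1,\bar\lambda_2+\beta,\bar\lambda_3+\beta,\lambda_4)$ with $\lambda_1,\bar\lambda_2,\bar\lambda_3,\lambda_4,\beta>0$ and $\lambda_1+\lambda_4=\bar\lambda_2+\bar\lambda_3=\frac12$. Let $\Phi_+$ be the edge-priority policy adapted to $D$ in which edges $\{1,2\}$ and $\{3,4\}$ have the highest priority. For every greedy policy $\Phi$ adapted to $D$, $\mu_{1,2}(\Phi)\le\mu_{1,2}(\Phi_+)$, $\mu_{3,4}(\Phi)\le\mu_{3,4}(\Phi_+)$, $\mu_{1,3}(\Phi)\ge\mu_{1,3}(\Phi_+)$ and $\mu_{2,4}(\Phi)\ge\mu_{2,4}(\Phi_+)$; equivalently, in kernel coordinates, $\alpha(\Phi)\le\alpha(\Phi_+)$.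
   Context: Matching model: classes arrive as independent Poisson processes of rates $\lambda_i$; classes $i,j$ matchable iff $\{i,j\}\in E$; unmatched items wait. A policy adapted to $D$: countable state space with queue-size map and unique empty state, probabilities of matching an arriving class-$i$ item with a waiting neighbour class $j$ or letting it wait, new state consistent with queue sizes, irreducible state chain. Greedy: no arriving item is left unmatched while a compatible item is waiting (every greedy policy is stable for this $\lambda$). $\mu_{i,j}(\Phi)=(\sum_l\lambda_l)\lim_tM_{t,\{i,j\}}/t$ a.s. is the matching rate between classes $i$ and $j$ in $(D,\lambda,\Phi)$, $M_{t,\{i,j\}}$ being the number of such matches among the first $t$ arrivals. Every solution of the conservation equation $\sum_{k\ni i}\mu_k=\lambda_i$ ($i\in V$) has the form $(\mu_{1,2},\mu_{1,3},\mu_{2,3},\mu_{2,4},\mu_{3,4})=(2\lambda_1\bar\lambda_2+\alpha,2\lambda_1\bar\lambda_3-\alpha,\beta,2\bar\lambda_2\lambda_4-\alpha,2\bar\lambda_3\lambda_4+\alpha)$ for a unique $\alpha$, its kernel coordinate; $\alpha(\Phi)$ denotes that of $\mu(\Phi)$. An edge-priority policy is the deterministic size-based greedy policy given by a strict order on edges: an arriving class-$i$ item is matched with the waiting neighbour class $j$ whose edge $\{i,j\}$ has the highest priority, and waits if no neighbour class has waiting items; for $\Phi_+$, edges $\{1,2\}$ and $\{3,4\}$ precede all others. *)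

From HB Require Import structures.
From mathcomp Require Import all_boot all_order all_algebra.
From mathcomp Require Import all_classical all_reals all_analysis.
From Stdlib Require Import Relations.
Set Implicit Arguments. Unset Strict Implicit. Unset Printing Implicit Defensive.
Import Order.TTheory GRing.Theory Num.Theory.
Import numFieldNormedType.Exports.
Local Open Scope classical_set_scope.
Local Open Scope ring_scope.

(* Classes 1,2,3,4 of the paper are encoded as 0,1,2,3 : 'I_4. *)

Definition diamond_edge1 (i j : nat) : bool :=
  [|| (i == 0) && (j == 1), (i == 0) && (j == 2), (i == 1) && (j == 2),
      (i == 1) && (j == 3) | (i == 2) && (j == 3)]%N.
Definition edgeD (i j : 'I_4) : bool :=
  diamond_edge1 i j || diamond_edge1 j i.

Definition lam (R : realType) (l1 l2b l3b l4 b : R) (i : 'I_4) : R :=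
  match val i with
  | 0 => l1 | 1 => l2b + b | 2 => l3b + b | _ => l4
  end.

Definition arr_prob (R : realType) (la : 'I_4 -> R) (i : 'I_4) : R :=
  la i / \sum_(k < 4) la k.

(* A policy: countable state space, queue-size map, empty state,
   probabilities of the action taken by an arriving class-i item
   (None = wait, Some j = match with a waiting class-j item), and the
   resulting new state. *)
Record policy (R : realType) := Policy {
  pS : countType;
  pq : pS -> 'I_4 -> nat;
  ps0 : pS;
  pp : pS -> 'I_4 -> option 'I_4 -> R;
  pnext : pS -> 'I_4 -> option 'I_4 -> pS
}.

Definition pstep (R : realType) (P : policy R) (s s' : pS P) : Prop :=
  exists (i : 'I_4) (a : option 'I_4), 0 < pp s i a /\ pnext s i a = s'.

Definition adapted (R : realType) (P : policy R) : Prop :=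
  (forall s, (forall i, pq s i = 0%N) <-> s = ps0 P) /\
  [/\ (forall (s : pS P) i a, 0 <= pp s i a),
      (forall (s : pS P) i, \sum_(a : option 'I_4) pp s i a = 1),
      (forall (s : pS P) i j, 0 < pp s i (Some j) ->
          [/\ edgeD i j, (0 < pq s j)%N &
              forall k, pq (pnext s i (Some j)) k =
                        (if k == j then (pq s k).-1 else pq s k)]),
      (forall (s : pS P) i, 0 < pp s i None ->
          forall k, pq (pnext s i None) k =
                    (if k == i then (pq s k).+1 else pq s k)) &
      (forall s s', clos_refl_trans _ (@pstep R P) s s')].

Definition greedy (R : realType) (P : policy R) : Prop :=
  forall (s : pS P) i, (exists j, edgeD i j && (0 < pq s j)%N) -> pp s i None = 0.

(* Strict order on edges given by a rank (smaller rank = higher priority). *)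
Definition edge_order (rk : 'I_4 -> 'I_4 -> nat) : Prop :=
  (forall i j, rk i j = rk j i) /\
  (forall i j k l, edgeD i j -> edgeD k l -> rk i j = rk k l ->
      ((i == k) && (j == l)) || ((i == l) && (j == k))).

Definition plus_order (rk : 'I_4 -> 'I_4 -> nat) : Prop :=
  edge_order rk /\
  forall i j, edgeD i j ->
    ~~ ((i == 0 :> nat) && (j == 1 :> nat) || (i == 1 :> nat) && (j == 0 :> nat)) ->
    ~~ ((i == 2 :> nat) && (j == 3 :> nat) || (i == 3 :> nat) && (j == 2 :> nat)) ->
    (rk (inord 0) (inord 1) < rk i j)%N /\ (rk (inord 2) (inord 3) < rk i j)%N.

Definition edge_priority (R : realType) (rk : 'I_4 -> 'I_4 -> nat)
    (P : policy R) : Prop :=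
  injective (@pq R P) /\
  (forall (s : pS P) i j, edgeD i j -> (0 < pq s j)%N ->
     (forall k, edgeD i k -> (0 < pq s k)%N -> k != j -> (rk i j < rk i k)%N) ->
     pp s i (Some j) = 1) /\
  (forall (s : pS P) i, (forall j, edgeD i j -> pq s j = 0%N) -> pp s i None = 1).

Fixpoint state_after (R : realType) (P : policy R)
    (a : nat -> 'I_4) (c : nat -> option 'I_4) (t : nat) : pS P :=
  match t with
  | 0 => ps0 P
  | t'.+1 => pnext (state_after P a c t') (a t') (c t')
  end.

(* (A, C) is a realization, on the probability space (Omega, Pr), of the
   matching model (D, la, P): A k = class of the (k+1)-th arrival,
   C k = action taken for it. *)
Definition realizes (R : realType) (la : 'I_4 -> R) (P : policy R)
    (d : measure_display) (Omega : measurableType d)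
    (Pr : probability Omega R)
    (A : nat -> Omega -> 'I_4) (C : nat -> Omega -> option 'I_4) : Prop :=
  [/\ (forall k i, measurable [set w | A k w = i]),
      (forall k c, measurable [set w | C k w = c]) &
      (forall t (a : nat -> 'I_4) (c : nat -> option 'I_4),
         Pr [set w | forall k, (k < t)%N -> A k w = a k /\ C k w = c k] =
         (\prod_(k < t) (arr_prob la (a k) *
                         pp (state_after P a c k) (a k) (c k)))%:E)].

Definition nmatch (Omega : Type)
    (A : nat -> Omega -> 'I_4) (C : nat -> Omega -> option 'I_4)
    (i j : 'I_4) (t : nat) (w : Omega) : nat :=
  (\sum_(k < t)
     (((A k w == i) && (C k w == Some j)) || ((A k w == j) && (C k w == Some i))
      : nat))%N.

Definition matching_rate (R : realType) (la : 'I_4 -> R)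
    (d : measure_display) (Omega : measurableType d)
    (Pr : probability Omega R)
    (A : nat -> Omega -> 'I_4) (C : nat -> Omega -> option 'I_4)
    (i j : 'I_4) (m : R) : Prop :=
  {ae Pr, forall w,
     (fun t : nat => (\sum_(l < 4) la l) * (nmatch A C i j t w)%:R / t%:R)
       @ \oo --> m}.

From HB Require Import structures.
From mathcomp Require Import all_boot all_order all_algebra.
From mathcomp Require Import all_classical all_reals all_analysis.
From mathcomp Require Import lra zify.
From Stdlib Require Import Lia.
Import Order.TTheory GRing.Theory Num.Theory.
Import numFieldNormedType.Exports.
Set Implicit Arguments. Unset Strict Implicit. Unset Printing Implicit Defensive.
Local Open Scope classical_set_scope.
Local Open Scope ring_scope.

(* Run a greedy policy and Phi+ on the same arrival sequence.  Whatever actions of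
   positive probability the two policies take, the classes with waiting items always
   form an independent set of D, and Phi+ departs from greedy behaviour only by
   preferring {1,2} and {3,4}; an invariant then shows that both systems keep the same
   queues of classes 2 and 3 while Phi+ is ahead on {1,2}, {3,4} and behind on {1,3},
   {2,4}.  So, conditionally on the arrivals, every outcome of Phi+ dominates every
   outcome of the greedy policy, hence at each time the number of {1,2}-matches under
   Phi+ stochastically dominates that under the greedy policy.  Stochastic domination
   at every time passes to almost-sure limits. *)

(** * Pathwise coupling on the diamond *)

Definition is_match (T : eqType) (i j a : T) (c : option T) : bool :=
  (a == i) && (c == Some j) || (a == j) && (c == Some i).

Definition count_matches (T : eqType) (i j : T) (a : nat -> T) (c : nat -> option T)
    (t : nat) : nat :=
  \sum_(k < t) is_match i j (a k) (c k).

(* Queue lengths of classes 1, ..., 4 (indices 0, ..., 3), kept as a tuple so that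
   [lia] sees four variables. *)
Definition qvec := (nat * nat * nat * nat)%type.

Definition qlen (x : qvec) (l : nat) : nat :=
  let: (x0, x1, x2, x3) := x in
  match l with 0 => x0 | 1 => x1 | 2 => x2 | _ => x3 end.

Definition qupdate (f : nat -> nat) (l : nat) (x : qvec) : qvec :=
  let: (x0, x1, x2, x3) := x in
  match l with
  | 0 => (f x0, x1, x2, x3) | 1 => (x0, f x1, x2, x3)
  | 2 => (x0, x1, f x2, x3) | _ => (x0, x1, x2, f x3)
  end.

Definition qnext (x : qvec) (i : nat) (o : option nat) : qvec :=
  if o is Some j then qupdate predn j x else qupdate succn i x.

Definition diamond_adj (i j : nat) : bool := diamond_edge1 i j || diamond_edge1 j i.

Definition greedy_move (x : qvec) (i : nat) (o : option nat) : bool :=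
  if o is Some j then diamond_adj i j && (0 < qlen x j)%N
  else all (fun j => diamond_adj i j ==> (qlen x j == 0%N)) (iota 0 4).

(* The only consequences of the priority of {1,2} and {3,4} that the coupling uses. *)
Definition plus_move (x : qvec) (i : nat) (o : option nat) : bool :=
  [&& greedy_move x i o,
      (i == 1%N) && (o == Some 3%N) ==> (qlen x 0 == 0%N) &
      (i == 2%N) && (o == Some 0%N) ==> (qlen x 3 == 0%N)].

Lemma plus_move_greedy x i o : plus_move x i o -> greedy_move x i o.
Proof. by case/and3P. Qed.

(* The waiting classes form an independent set of D: a subset of {1,4}, or {2}, or {3}. *)
Definition qindependent (x : qvec) : bool :=
  let: (x0, x1, x2, x3) := x in
  ((x1 == 0) || (x2 == 0)) && ((x0 == 0) && (x3 == 0) || (x1 == 0) && (x2 == 0))%N.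

Lemma qindependent_next x i o :
  (i < 4)%N -> greedy_move x i o -> qindependent x -> qindependent (qnext x i o).
Proof.
case: x => [[[x0 x1] x2] x3].
by case: i => [|[|[|[|//]]]] _; case: o => [[|[|[|[|j]]]]|] /=; lia.
Qed.

(* [x], [m]: queues and match counts of the greedy system; [y], [n]: those of Phi+.
   Classes 1 and 4 are conserved, the queues of classes 2 and 3 agree, and so do the
   numbers of matches of class 2 (resp. 3) with classes 1 and 4; Phi+ is ahead on {1,2}
   and behind on {1,3}. *)
Definition coupling_inv (x y : qvec) (m n : nat -> nat -> nat) : Prop :=
  let: (x0, x1, x2, x3) := x in
  let: (y0, y1, y2, y3) := y in
  [/\ x1 = y1 /\ x2 = y2,
      x0 + m 0 1 + m 0 2 = y0 + n 0 1 + n 0 2 /\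
      x3 + m 1 3 + m 2 3 = y3 + n 1 3 + n 2 3,
      m 0 1 + m 1 3 = n 0 1 + n 1 3 /\ m 0 2 + m 2 3 = n 0 2 + n 2 3 &
      m 0 1 <= n 0 1 /\ n 0 2 <= m 0 2]%N.

Lemma coupling_inv_next x y m n i o1 o2 :
  (i < 4)%N -> qindependent x -> qindependent y ->
  greedy_move x i o1 -> plus_move y i o2 -> coupling_inv x y m n ->
  coupling_inv (qnext x i o1) (qnext y i o2)
    (fun k l => m k l + is_match k l i o1)%N (fun k l => n k l + is_match k l i o2)%N.
Proof.
case: x => [[[x0 x1] x2] x3]; case: y => [[[y0 y1] y2] y3].
case: i => [|[|[|[|//]]]] _;
case: o1 => [[|[|[|[|j1]]]]|]; case: o2 => [[|[|[|[|j2]]]]|];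
rewrite /plus_move /= => ? ? ? ? [? ? ? ?]; split; lia.
Qed.

Section Coupling.
Variables (a : nat -> nat) (c1 c2 : nat -> option nat).

Fixpoint qtraj (c : nat -> option nat) (t : nat) : qvec :=
  if t is t'.+1 then qnext (qtraj c t') (a t') (c t') else (0, 0, 0, 0)%N.

Definition matches_upto (c : nat -> option nat) t (i j : nat) : nat :=
  count_matches i j a c t.

Lemma matches_uptoS c t :
  matches_upto c t.+1 = (fun i j => matches_upto c t i j + is_match i j (a t) (c t))%N.
Proof.
by apply/funext => i; apply/funext => j; rewrite /matches_upto /count_matches big_ord_recr.
Qed.

Lemma coupling_matches T :
  (forall k, k < T -> a k < 4)%N ->
  (forall k, k < T -> greedy_move (qtraj c1 k) (a k) (c1 k))%N ->
  (forall k, k < T -> plus_move (qtraj c2 k) (a k) (c2 k))%N ->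
  [/\ count_matches 0 1 a c1 T <= count_matches 0 1 a c2 T,
      count_matches 2 3 a c1 T <= count_matches 2 3 a c2 T,
      count_matches 0 2 a c2 T <= count_matches 0 2 a c1 T &
      count_matches 1 3 a c2 T <= count_matches 1 3 a c1 T]%N.
Proof.
move=> a4 gT pT.
have inv t : (t <= T)%N -> [/\ qindependent (qtraj c1 t), qindependent (qtraj c2 t) &
    coupling_inv (qtraj c1 t) (qtraj c2 t) (matches_upto c1 t) (matches_upto c2 t)].
  elim: t => [_|t IH tT]; first by rewrite /coupling_inv /matches_upto /count_matches !big_ord0.
  have [ind1 ind2 I] := IH (ltnW tT).
  have pt := pT t tT; rewrite /= !matches_uptoS; split.
  - exact: qindependent_next (a4 t tT) (gT t tT) ind1.
  - exact: qindependent_next (a4 t tT) (plus_move_greedy pt) ind2.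
  - exact: coupling_inv_next (a4 t tT) ind1 ind2 (gT t tT) pt I.
have [_ _] := inv T (leqnn T).
rewrite /coupling_inv /matches_upto.
case: (qtraj c1 T) => [[[? ?] ?] ?]; case: (qtraj c2 T) => [[[? ?] ?] ?].
move=> [_ _ [? ?] [? ?]]; split; lia.
Qed.

End Coupling.

Lemma mass1_support (R : numDomainType) (T : finType) (f : T -> R) (x y : T) :
  (forall z, 0 <= f z) -> \sum_z f z = 1 -> f x = 1 -> 0 < f y -> y = x.
Proof.
move=> f_ge0 f_sum fx1 fy_gt0; apply/eqP/negP => /negP yx.
have : \sum_(z | z != x) f z == 0.
  by move: f_sum; rewrite (bigD1 x) //= fx1 -{2}[1]addr0 => /addrI ->.
rewrite psumr_eq0 => [/allP/(_ y (mem_index_enum y))|z _]; last exact: f_ge0.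
by rewrite yx /= => /eqP fy0; rewrite fy0 ltxx in fy_gt0.
Qed.

Lemma edgeD_irr (i : 'I_4) : edgeD i i = false.
Proof. by case: i => [[|[|[|[|]]]] ?]. Qed.

Section PolicyQueues.
Variable R : realType.
Implicit Types (P : policy R) (rk : 'I_4 -> 'I_4 -> nat).

Definition qof P (s : pS P) : qvec :=
  (pq s (inord 0), pq s (inord 1), pq s (inord 2), pq s (inord 3)).

Lemma qlen_qof P (s : pS P) (k : 'I_4) : qlen (qof s) k = pq s k.
Proof. by case: k => [[|[|[|[|//]]]] k4]; congr (pq s _); apply: val_inj; rewrite /= inordK. Qed.

Lemma qvecP (x y : qvec) : (forall k : 'I_4, qlen x k = qlen y k) -> x = y.
Proof.
case: x => [[[x0 x1] x2] x3]; case: y => [[[y0 y1] y2] y3] eq_len.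
by move: (eq_len (@Ordinal 4 0 isT)) (eq_len (@Ordinal 4 1 isT))
  (eq_len (@Ordinal 4 2 isT)) (eq_len (@Ordinal 4 3 isT)) => /= -> -> -> ->.
Qed.

Lemma qlen_update f (j k : 'I_4) x :
  qlen (qupdate f j x) k = if k == j then f (qlen x k) else qlen x k.
Proof.
by case: x => [[[? ?] ?] ?]; case: j => [[|[|[|[|//]]]] ?]; case: k => [[|[|[|[|//]]]] ?].
Qed.

Lemma qlen_next x (i : 'I_4) (o : option 'I_4) (k : 'I_4) :
  qlen (qnext x i (omap val o)) k =
  if o is Some j then (if k == j then (qlen x k).-1 else qlen x k)
  else if k == i then (qlen x k).+1 else qlen x k.
Proof. by case: o => [j|]; rewrite /= qlen_update. Qed.

Lemma qof_next P (s : pS P) i o : adapted P -> 0 < pp s i o ->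
  qof (pnext s i o) = qnext (qof s) i (omap val o).
Proof.
case=> _ [_ _ hsome hnone _] po; apply: qvecP => k; rewrite !qlen_qof qlen_next qlen_qof.
case: o po => [j|] po; last exact: hnone.
by have [_ _ ->] := hsome _ _ _ po.
Qed.

Lemma qof_state_after P (a : nat -> 'I_4) (c : nat -> option 'I_4) t : adapted P ->
  (forall k, (k < t)%N -> 0 < pp (state_after P a c k) (a k) (c k)) ->
  qof (state_after P a c t) = qtraj (fun k => val (a k)) (fun k => omap val (c k)) t.
Proof.
move=> hP; elim: t => [_|t IH pos] /=.
  have [empty _] := hP; have pq0 k : pq (ps0 P) k = 0%N by exact: (proj2 (empty _) erefl).
  by rewrite /qof !pq0.
by rewrite qof_next ?IH ?pos // => k kt; apply: pos; exact: ltnW.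
Qed.

Lemma greedy_move_qof P (s : pS P) i o : adapted P -> greedy P -> 0 < pp s i o ->
  greedy_move (qof s) i (omap val o).
Proof.
move=> [_ [_ _ hsome _ _]] hg; case: o => [j|] po.
  change (diamond_adj i j && (0 < qlen (qof s) j)%N).
  by have [ij pj _] := hsome _ _ _ po; rewrite qlen_qof pj andbT.
apply/allP => j; rewrite mem_iota => /andP [_ j4]; apply/implyP => ij.
rewrite -[j]/(val (Ordinal j4)) qlen_qof; apply: contraTT po => pj.
by rewrite (hg s i) ?ltxx //; exists (Ordinal j4); rewrite lt0n pj andbT.
Qed.

Lemma edge_priority_choice rk P (s : pS P) i o :
  adapted P -> edge_order rk -> edge_priority rk P -> 0 < pp s i o ->
  if o is Some j then forall k, edgeD i k -> (0 < pq s k)%N -> (rk i j <= rk i k)%N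
  else forall j, edgeD i j -> pq s j = 0%N.
Proof.
move=> [_ [pp_ge0 pp_sum _ _ _]] [_ rk_inj] [_ [prio_some prio_none]] po.
have [[j0 nb_j0]|no_nb] := pselect (exists j, edgeD i j && (0 < pq s j)%N).
  case: (@arg_minnP _ j0 (fun j => edgeD i j && (0 < pq s j)%N) (rk i) nb_j0).
  move=> j /andP [ij pj] j_min.
  suff -> : o = Some j by move=> k ik pk; apply: j_min; rewrite ik pk.
  apply: mass1_support (pp_ge0 s i) (pp_sum s i) _ po.
  apply: prio_some => // k ik pk kj; rewrite ltn_neqAle j_min ?ik ?pk // andbT.
  apply: contra kj => /eqP eq_rk; have := rk_inj _ _ _ _ ij ik eq_rk.
  by rewrite eqxx /= eq_sym => /orP [//|/andP [/eqP ik' /eqP ji]]; rewrite ji edgeD_irr in ij.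
have nb_empty j : edgeD i j -> pq s j = 0%N.
  move=> ij; apply/eqP; rewrite -leqn0 leqNgt.
  by apply: contra_notN no_nb => pj; exists j; rewrite ij.
by rewrite (mass1_support (pp_ge0 s i) (pp_sum s i) (prio_none s i nb_empty) po).
Qed.

Lemma edge_priority_greedy rk P : adapted P -> edge_order rk -> edge_priority rk P -> greedy P.
Proof.
move=> hP hrk he s i [j /andP [ij pj]]; have [_ [pp_ge0 _ _ _ _]] := hP.
apply/eqP; rewrite eq_le pp_ge0 andbT leNgt; apply/negP => po.
by have := edge_priority_choice hP hrk he po j ij; move/eqP; rewrite -leqn0 leqNgt pj.
Qed.

Lemma plus_move_qof rk P (s : pS P) i o : adapted P -> plus_order rk -> edge_priority rk P ->
  0 < pp s i o -> plus_move (qof s) i (omap val o).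
Proof.
move=> hP [hrk top] he po; have [_ [_ _ hsome _ _]] := hP.
rewrite /plus_move (greedy_move_qof hP (edge_priority_greedy hP hrk he) po) /=.
case: o po => [j|] po /=; last by rewrite !andbF.
have [ij _ _] := hsome _ _ _ po.
have better_empty k : edgeD i k -> (rk i k < rk i j)%N -> pq s k = 0%N.
  move=> ik lt_kj; apply/eqP; rewrite -leqn0 leqNgt; apply/negP => pk.
  by have := edge_priority_choice hP hrk he po k ik pk; rewrite leqNgt lt_kj.
apply/andP; split; apply/implyP => /andP [/eqP i_val /eqP [j_val]]; apply/eqP.
- have := top i j ij; rewrite i_val j_val => /(_ isT isT) [lt01 _].
  apply: better_empty; first by rewrite /edgeD inordK // i_val.
  by rewrite hrk.1 -[X in inord X](i_val) inord_val in lt01.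
- have := top i j ij; rewrite i_val j_val => /(_ isT isT) [_ lt23].
  apply: better_empty; first by rewrite /edgeD inordK // i_val.
  by rewrite -[X in inord X]i_val inord_val in lt23.
Qed.

End PolicyQueues.

Definition extend (T : Type) t (f : {ffun 'I_t -> T}) (dflt : T) (k : nat) : T :=
  if insub k is Some k' then f k' else dflt.

Lemma extendE (T : Type) t (f : {ffun 'I_t -> T}) dflt (k : 'I_t) :
  extend f dflt k = f k.
Proof. by rewrite /extend valK. Qed.

Lemma extend_default (T : Type) t (f : {ffun 'I_t -> T}) dflt k :
  (t <= k)%N -> extend f dflt k = dflt.
Proof. by move=> tk; rewrite /extend insubN // -leqNgt. Qed.

Definition snoc_ffun (T : Type) t (p : {ffun 'I_t -> T} * T) : {ffun 'I_t.+1 -> T} :=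
  [ffun k : 'I_t.+1 => extend p.1 p.2 k].

Lemma extend_snoc_ffun (T : Type) t (p : {ffun 'I_t -> T} * T) dflt k :
  (k < t)%N -> extend (snoc_ffun p) dflt k = extend p.1 dflt k.
Proof.
move=> kt; rewrite -[k]/(val (Ordinal (leqW kt))) extendE ffunE.
by rewrite -[k]/(val (Ordinal kt)) !extendE.
Qed.

Lemma extend_snoc_ffun_last (T : Type) t (p : {ffun 'I_t -> T} * T) dflt :
  extend (snoc_ffun p) dflt t = p.2.
Proof. by rewrite -[t]/(val (@ord_max t)) extendE ffunE extend_default. Qed.

Lemma snoc_ffun_bij (T : Type) t : bijective (@snoc_ffun T t).
Proof.
exists (fun f : {ffun 'I_t.+1 -> T} => ([ffun k => f (widen_ord (leqnSn t) k)], f ord_max)).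
  move=> [f x]; congr pair; last by rewrite ffunE extend_default.
  by apply/ffunP => k; rewrite !ffunE -[X in extend _ _ X]/(val k) extendE.
move=> f; apply/ffunP => k; rewrite ffunE.
have [kt|tk] := ltnP k t.
  by rewrite -[val k]/(val (Ordinal kt)) extendE ffunE; congr (f _); apply: val_inj.
rewrite extend_default //; congr (f _); apply: val_inj => /=.
by apply/eqP; rewrite eqn_leq tk -ltnS ltn_ord.
Qed.

Lemma state_after_eq (R : realType) (P : policy R) a c a' c' k :
  (forall j, (j < k)%N -> a j = a' j /\ c j = c' j) ->
  state_after P a c k = state_after P a' c' k.
Proof.
elim: k => [//|k IH] eq_ac /=.
have [-> ->] := eq_ac k (ltnSn k).
by rewrite IH // => j jk; apply: eq_ac; exact: ltnW.
Qed.

Section Traces.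
Variable R : realType.

Definition trace t := ({ffun 'I_t -> 'I_4} * {ffun 'I_t -> option 'I_4})%type.

Definition action_weight (P : policy R) t (a : nat -> 'I_4)
    (c : {ffun 'I_t -> option 'I_4}) : R :=
  \prod_(k < t) pp (state_after P a (extend c None) k) (a k) (extend c None k).

Definition trace_weight (la : 'I_4 -> R) (P : policy R) t (x : trace t) : R :=
  \prod_(k < t) (arr_prob la (extend x.1 ord0 k) *
    pp (state_after P (extend x.1 ord0) (extend x.2 None) k)
       (extend x.1 ord0 k) (extend x.2 None k)).

Lemma trace_weightE la P t (x : trace t) :
  trace_weight la P x =
  (\prod_(k < t) arr_prob la (extend x.1 ord0 k)) * action_weight P (extend x.1 ord0) x.2.
Proof. exact: big_split. Qed.

Lemma sum_action_weight (P : policy R) :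
  (forall (s : pS P) i, \sum_(o : option 'I_4) pp s i o = 1) ->
  forall t (a : nat -> 'I_4), \sum_(c : {ffun 'I_t -> option 'I_4}) action_weight P a c = 1.
Proof.
move=> pp_sum1; elim=> [|t IH] a.
  rewrite /action_weight (eq_bigr (fun _ => 1)) => [|c _]; last exact: big_ord0.
  by rewrite sumr_const card_ffun card_ord.
rewrite (reindex (@snoc_ffun _ t)); last exact/onW_bij/snoc_ffun_bij.
rewrite -(pair_bigA _ (fun c o => action_weight P a (snoc_ffun (c, o)))) -[RHS](IH a).
apply: eq_bigr => c _ /=.
have snoc_weight o : action_weight P a (snoc_ffun (c, o)) =
    action_weight P a c * pp (state_after P a (extend c None) t) (a t) o.
  rewrite /action_weight big_ord_recr /= extend_snoc_ffun_last.
  have same_past k : (k <= t)%N ->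
      state_after P a (extend (snoc_ffun (c, o)) None) k = state_after P a (extend c None) k.
    by move=> kt; apply: state_after_eq => j jk; rewrite extend_snoc_ffun // (leq_trans jk kt).
  rewrite same_past //; congr (_ * _); apply: eq_bigr => k _.
  by rewrite same_past 1?ltnW // extend_snoc_ffun.
by rewrite (eq_bigr _ (fun o _ => snoc_weight o)) -mulr_sumr pp_sum1 mulr1.
Qed.

Definition trace_count (i j : 'I_4) t (x : trace t) : nat :=
  count_matches i j (extend x.1 ord0) (extend x.2 None) t.

Section Realization.
Variables (la : 'I_4 -> R) (P : policy R) (d : measure_display) (Om : measurableType d).
Variables (Pr : probability Om R) (A : nat -> Om -> 'I_4) (C : nat -> Om -> option 'I_4).
Hypothesis hreal : realizes la P Pr A C.

Definition cylinder t (x : trace t) : set Om :=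
  [set w | forall k, (k < t)%N -> A k w = extend x.1 ord0 k /\ C k w = extend x.2 None k].

Definition trace_of t (w : Om) : trace t := ([ffun k : 'I_t => A k w], [ffun k : 'I_t => C k w]).

Lemma cylinderP t (x : trace t) w : cylinder x w <-> x = trace_of t w.
Proof.
split=> [cx|->{x} k kt]; last by rewrite -[k]/(val (Ordinal kt)) !extendE !ffunE.
case: x cx => a c cx; congr pair; apply/ffunP => k; rewrite ffunE;
  by have [eA eC] := cx k (ltn_ord k); rewrite ?eA ?eC extendE.
Qed.

Lemma measurable_cylinder t (x : trace t) : measurable (cylinder x).
Proof.
case: hreal => mA mC _.
rewrite (_ : cylinder x = \bigcap_(k in [set k | (k < t)%N])
   ([set w | A k w = extend x.1 ord0 k] `&` [set w | C k w = extend x.2 None k])).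
  by apply: bigcap_measurableType => k _; apply: measurableI.
by apply/seteqP; split => w /= cw k /= kt; have := cw k kt.
Qed.

Lemma trace_event_cylinders t (Q : pred (trace t)) :
  [set w | Q (trace_of t w)] = \big[setU/set0]_(x <- enum Q) cylinder x.
Proof.
rewrite -bigcup_seq; apply/seteqP; split => w /=.
  by move=> Qw; exists (trace_of t w); [rewrite /= mem_enum | apply/cylinderP].
by move=> [x /=]; rewrite mem_enum => Qx /cylinderP <-.
Qed.

Lemma measurable_trace_event t (Q : pred (trace t)) : measurable [set w | Q (trace_of t w)].
Proof.
by rewrite trace_event_cylinders; apply: bigsetU_measurable => x _; exact: measurable_cylinder.
Qed.

Lemma prob_trace_event t (Q : pred (trace t)) :
  Pr [set w | Q (trace_of t w)] = (\sum_(x | Q x) trace_weight la P x)%:E.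
Proof.
rewrite trace_event_cylinders -bigcup_seq measure_fin_bigcup //.
- rewrite -fsbig_seq ?enum_uniq // big_enum -sumEFin /=.
  by apply: eq_big => // x _; case: hreal => _ _ ->.
- by move=> x y _ _ [w [/cylinderP -> /cylinderP ->]].
- by move=> x _; exact: measurable_cylinder.
Qed.

Lemma nmatch_trace_of i j t w : nmatch A C i j t w = trace_count i j (trace_of t w).
Proof. by apply: eq_bigr => k _; rewrite !extendE !ffunE. Qed.

Lemma measurable_count_event i j t (g : pred nat) :
  measurable [set w | g (nmatch A C i j t w)].
Proof.
under eq_set do rewrite nmatch_trace_of.
exact: (measurable_trace_event (fun x => g (trace_count i j x))).
Qed.

Lemma prob_count_event i j t (g : pred nat) :
  Pr [set w | g (nmatch A C i j t w)] =
  (\sum_(x : trace t | g (trace_count i j x)) trace_weight la P x)%:E.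
Proof.
under eq_set do rewrite nmatch_trace_of.
exact: (prob_trace_event (fun x => g (trace_count i j x))).
Qed.

End Realization.
End Traces.

(** * Stochastic domination of matching counts *)

Lemma count_matches_val n (i j : nat) (a : nat -> 'I_n.+1) (c : nat -> option 'I_n.+1) t :
  (i <= n)%N -> (j <= n)%N ->
  count_matches (inord i) (inord j) a c t =
  count_matches i j (fun k => val (a k)) (fun k => omap val (c k)) t.
Proof.
move=> ni nj; apply: eq_bigr => k _; rewrite /is_match.
have val_inord (x : 'I_n.+1) l : (l <= n)%N -> (x == inord l) = (val x == l).
  by move=> ln; rewrite -val_eqE /= inordK.
by case: (c k) => [y|]; rewrite ?(inj_eq (@Some_inj _)) !val_inord.
Qed.

Lemma action_weight_gt0 (R : realType) (P : policy R) t a (c : {ffun 'I_t -> option 'I_4}) k :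
  adapted P -> 0 < action_weight P a c -> (k < t)%N ->
  0 < pp (state_after P a (extend c None) k) (a k) (extend c None k).
Proof.
move=> [_ [pp_ge0 _ _ _ _]] /lt0r_neq0/prodf_neq0/(_ _ isT) w_neq0 kt.
by rewrite lt0r (w_neq0 (Ordinal kt)) pp_ge0.
Qed.

Lemma trace_coupling (R : realType) rk (Ph Pp : policy R) :
  adapted Ph -> greedy Ph -> adapted Pp -> plus_order rk -> edge_priority rk Pp ->
  forall t (a : {ffun 'I_t -> 'I_4}) cg cp,
  0 < action_weight Ph (extend a ord0) cg -> 0 < action_weight Pp (extend a ord0) cp ->
  [/\ trace_count (inord 0) (inord 1) (a, cg) <= trace_count (inord 0) (inord 1) (a, cp),
      trace_count (inord 2) (inord 3) (a, cg) <= trace_count (inord 2) (inord 3) (a, cp),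
      trace_count (inord 0) (inord 2) (a, cp) <= trace_count (inord 0) (inord 2) (a, cg) &
      trace_count (inord 1) (inord 3) (a, cp) <= trace_count (inord 1) (inord 3) (a, cg)]%N.
Proof.
move=> hPh hg hPp hrk he t a cg cp wg wp; rewrite /trace_count !count_matches_val //.
apply: coupling_matches => k kt; first exact: ltn_ord.
- rewrite -(qof_state_after hPh (fun j jk => action_weight_gt0 hPh wg (ltn_trans jk kt))).
  exact: greedy_move_qof hPh hg (action_weight_gt0 hPh wg kt).
- rewrite -(qof_state_after hPp (fun j jk => action_weight_gt0 hPp wp (ltn_trans jk kt))).
  exact: plus_move_qof hPp hrk he (action_weight_gt0 hPp wp kt).
Qed.

(* If some atom of [p1] has its count in the up-set [Q], then so does every atom of [p2],
   and the right-hand side is 1. *)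
Lemma mass_upset_le (R : realDomainType) (T : finType) (p1 p2 : T -> R) (n1 n2 : T -> nat)
    (Q : pred nat) :
  (forall c, 0 <= p1 c) -> (forall c, 0 <= p2 c) -> \sum_c p1 c = 1 -> \sum_c p2 c = 1 ->
  (forall c1 c2, 0 < p1 c1 -> 0 < p2 c2 -> (n1 c1 <= n2 c2)%N) ->
  (forall m n, (m <= n)%N -> Q m -> Q n) ->
  \sum_(c | Q (n1 c)) p1 c <= \sum_(c | Q (n2 c)) p2 c.
Proof.
move=> p1_ge0 p2_ge0 p1_sum p2_sum n12 Q_up.
have [[c1 /andP [Qc1 pc1]] | no_c1] := pselect (exists c, Q (n1 c) && (0 < p1 c)).
  have -> : \sum_(c | Q (n2 c)) p2 c = 1.
    rewrite -p2_sum [RHS](bigID (fun c => Q (n2 c))) /= [X in _ = _ + X]big1 ?addr0 // => c nQc.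
    apply/eqP; rewrite eq_le p2_ge0 andbT leNgt; apply: contra nQc => pc.
    exact: Q_up (n12 _ _ pc1 pc) Qc1.
  by rewrite -p1_sum [X in _ <= X](bigID (fun c => Q (n1 c))) /= lerDl sumr_ge0.
rewrite big1 ?sumr_ge0 // => c Qc; apply/eqP; rewrite eq_le p1_ge0 andbT leNgt.
by apply/negP => pc; apply: no_c1; exists c; rewrite Qc pc.
Qed.

Lemma sum_trace_weight_upset_le (R : realType) (la : 'I_4 -> R) (P1 P2 : policy R) t
    (n : trace t -> nat) (Q : pred nat) :
  adapted P1 -> adapted P2 -> (forall i, 0 <= arr_prob la i) ->
  (forall m n, (m <= n)%N -> Q m -> Q n) ->
  (forall a c1 c2, 0 < action_weight P1 (extend a ord0) c1 ->
     0 < action_weight P2 (extend a ord0) c2 -> (n (a, c1) <= n (a, c2))%N) ->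
  \sum_(x | Q (n x)) trace_weight la P1 x <= \sum_(x | Q (n x)) trace_weight la P2 x.
Proof.
move=> [_ [p1_ge0 p1_sum _ _ _]] [_ [p2_ge0 p2_sum _ _ _]] arr_ge0 Q_up n12.
have by_arrivals P : \sum_(x | Q (n x)) trace_weight la P x =
    \sum_a \sum_(c | Q (n (a, c))) trace_weight la P (a, c).
  by rewrite pair_big_dep; apply: eq_big => -[a c].
rewrite !by_arrivals; apply: ler_sum => a _.
rewrite !(eq_bigr _ (fun c _ => trace_weightE la _ (a, c))) /= -!mulr_sumr.
apply: ler_wpM2l; first by apply: prodr_ge0 => k _; exact: arr_ge0.
apply: mass_upset_le => //; try exact: sum_action_weight.
- by move=> c; apply: prodr_ge0 => k _; exact: p1_ge0.
- by move=> c; apply: prodr_ge0 => k _; exact: p2_ge0.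
- exact: n12.
Qed.

(** * Almost-sure limits under stochastic domination *)

Section AeLimits.
Variables (R : realType) (d : measure_display) (O : measurableType d).
Variable P : probability O R.

Lemma ae_cvg_eventually_gt (f : nat -> O -> R) (m x e : R) :
  (forall t, measurable [set w | x < f t w]) -> x < m -> e < 1 ->
  {ae P, forall w, f ^~ w @ \oo --> m} ->
  exists T : nat,
    (e%:E < P (\bigcap_(t in [set t | (T <= t)%N]) [set w | (x < f t w)%R]))%E.
Proof.
move=> mf xm e1 [N [mN PN0 cN]].
pose B T := \bigcap_(t in [set t | (T <= t)%N]) [set w | x < f t w].
have mB T : measurable (B T) by apply: bigcap_measurableType => t _; exact: mf.
have ndB : nondecreasing_seq B.
  move=> T T' TT'; apply/subsetPset => w Bw t /= T't; apply: Bw; exact: leq_trans T't.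
have mU : measurable (\bigcup_T B T) by exact: bigcup_measurable.
have PB1 : P (\bigcup_T B T) = 1%E.
  apply/eqP; rewrite eq_le probability_le1 //=.
  rewrite -[X in (X <= _)%E](sube0 1) -PN0 -probability_setC //.
  apply: le_measure; rewrite ?inE //; first exact: measurableC.
  move=> w /= Nw.
  have /cvgr_gt/(_ _ xm)[T _ fT] : f ^~ w @ \oo --> m.
    by apply: contra_notP Nw => ?; exact: cN.
  by exists T => // t; exact: fT.
have eU : (e%:E < P (\bigcup_T B T))%E by rewrite PB1 lte_fin.
have [T _ HT] := nondecreasing_cvg_mu (mu := P) mB mU ndB (open_ereal_gt' eU).
by exists T; apply: (HT T) => /=.
Qed.

End AeLimits.

Lemma ae_lim_le_of_dominated (R : realType)
    d1 (O1 : measurableType d1) (P1 : probability O1 R)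
    d2 (O2 : measurableType d2) (P2 : probability O2 R)
    (f1 : nat -> O1 -> R) (f2 : nat -> O2 -> R) (m1 m2 : R) :
  (forall t x, measurable [set w | x < f1 t w]) ->
  (forall t x, measurable [set w | x < f2 t w]) ->
  (forall t x, measurable [set w | f2 t w < x]) ->
  (forall t x, (P1 [set w | (x < f1 t w)%R] <= P2 [set w | (x < f2 t w)%R])%E) ->
  {ae P1, forall w, f1 ^~ w @ \oo --> m1} ->
  {ae P2, forall w, f2 ^~ w @ \oo --> m2} -> m1 <= m2.
Proof.
(* If m2 < m1, then for x the midpoint and t large, both events [x < f2 t] and
   [f2 t < x] would have probability more than 1/2. *)
move=> mf1 mf2 mf2' dom cv1 cv2; rewrite leNgt; apply/negP => m21.
pose x := (m1 + m2) / 2.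
have [||T1 HT1] := ae_cvg_eventually_gt (e := 2^-1) (fun t => mf1 t x) _ _ cv1.
- by rewrite /x; lra.
- lra.
have mg t : measurable [set w | - x < - f2 t w].
  by under eq_set do rewrite ltrN2; exact: mf2'.
have cvN2 : {ae P2, forall w, (fun t => - f2 t w) @ \oo --> - m2}.
  by apply: filterS cv2 => w; exact: cvgN.
have [||T2 HT2] := ae_cvg_eventually_gt (e := 2^-1) mg _ _ cvN2.
- by rewrite /x; lra.
- lra.
pose T := maxn T1 T2.
have gt1 : ((2^-1)%:E < P2 [set w | (x < f2 T w)%R])%E.
  apply: (lt_le_trans HT1); apply: le_trans (dom T x).
  apply: le_measure; rewrite ?inE ?mf1 //; first by apply: bigcap_measurableType => t _; exact: mf1.
  by move=> w /= Hw; apply: Hw; rewrite /= leq_maxl.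
have gt2 : ((2^-1)%:E < P2 [set w | (f2 T w < x)%R])%E.
  apply: (lt_le_trans HT2); apply: le_measure; rewrite ?inE ?mf2' //.
    by apply: bigcap_measurableType => t _; exact: mg.
  by move=> w /= Hw; have := Hw T; rewrite /= leq_maxr ltrN2; apply.
have : (P2 [set w | (x < f2 T w)%R] + P2 [set w | (f2 T w < x)%R] <= 1)%E.
  rewrite -measureU ?probability_le1 //; first exact: measurableU.
  by apply/seteqP; split => // w /= [/lt_trans h /h]; rewrite ltxx.
apply/negP; rewrite -ltNge.
have -> : (1 = (2^-1)%:E + (2^-1)%:E :> \bar R)%E by rewrite -EFinD; congr _%:E; lra.
exact: lteD.
Qed.


Lemma matching_rate_le (R : realType) (la : 'I_4 -> R) (P1 P2 : policy R)
    d1 (O1 : measurableType d1) (Pr1 : probability O1 R) A1 C1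
    d2 (O2 : measurableType d2) (Pr2 : probability O2 R) A2 C2 (i j : 'I_4) (m1 m2 : R) :
  (forall l, 0 <= la l) -> adapted P1 -> adapted P2 ->
  realizes la P1 Pr1 A1 C1 -> realizes la P2 Pr2 A2 C2 ->
  matching_rate la Pr1 A1 C1 i j m1 -> matching_rate la Pr2 A2 C2 i j m2 ->
  (forall t (a : {ffun 'I_t -> 'I_4}) c1 c2,
     0 < action_weight P1 (extend a ord0) c1 -> 0 < action_weight P2 (extend a ord0) c2 ->
     (trace_count i j (a, c1) <= trace_count i j (a, c2))%N) ->
  m1 <= m2.
Proof.
move=> la_ge0 hP1 hP2 h1 h2 hm1 hm2 n12.
pose S := \sum_(l < 4) la l; pose rate t (n : nat) := S * n%:R / t%:R.
have rate_le t : {homo rate t : m n / (m <= n)%N >-> m <= n}.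
  move=> m n mn; apply: ler_wpM2r; first by rewrite invr_ge0.
  by apply: ler_wpM2l; [exact: sumr_ge0 | rewrite ler_nat].
apply: (ae_lim_le_of_dominated (f1 := fun t w => rate t (nmatch A1 C1 i j t w))
                               (f2 := fun t w => rate t (nmatch A2 C2 i j t w)) _ _ _ _ hm1 hm2).
- by move=> t x; exact: (measurable_count_event h1 i j t (fun n => x < rate t n)).
- by move=> t x; exact: (measurable_count_event h2 i j t (fun n => x < rate t n)).
- by move=> t x; exact: (measurable_count_event h2 i j t (fun n => rate t n < x)).
move=> t x; rewrite (prob_count_event h1 i j t (fun n => x < rate t n)).
rewrite (prob_count_event h2 i j t (fun n => x < rate t n)) lee_fin.
apply: (sum_trace_weight_upset_le (n := @trace_count i j t) (Q := fun n => x < rate t n)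
         hP1 hP2 _ _ (n12 t)) => [l|m n].
- by rewrite /arr_prob divr_ge0 ?sumr_ge0.
- by move=> /(rate_le t) /[swap] /lt_le_trans; apply.
Qed.

Theorem lemmaC1 (R : realType) (l1 l2b l3b l4 b : R)
  (hl1 : 0 < l1) (hl2 : 0 < l2b) (hl3 : 0 < l3b) (hl4 : 0 < l4) (hb : 0 < b)
  (h14 : l1 + l4 = 2^-1) (h23 : l2b + l3b = 2^-1)
  (rk : 'I_4 -> 'I_4 -> nat) (hrk : plus_order rk)
  (Pp : policy R) (hPp : adapted Pp) (hPpe : edge_priority rk Pp)
  (Ph : policy R) (hPh : adapted Ph) (hPhg : greedy Ph)
  (d : measure_display) (Om : measurableType d) (Pr : probability Om R)
  (A : nat -> Om -> 'I_4) (C : nat -> Om -> option 'I_4)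
  (hreal : realizes (lam l1 l2b l3b l4 b) Ph Pr A C)
  (d' : measure_display) (Om' : measurableType d') (Pr' : probability Om' R)
  (A' : nat -> Om' -> 'I_4) (C' : nat -> Om' -> option 'I_4)
  (hreal' : realizes (lam l1 l2b l3b l4 b) Pp Pr' A' C')
  (m12 m13 m24 m34 p12 p13 p24 p34 : R)
  (hm12 : matching_rate (lam l1 l2b l3b l4 b) Pr A C (inord 0) (inord 1) m12)
  (hm13 : matching_rate (lam l1 l2b l3b l4 b) Pr A C (inord 0) (inord 2) m13)
  (hm24 : matching_rate (lam l1 l2b l3b l4 b) Pr A C (inord 1) (inord 3) m24)
  (hm34 : matching_rate (lam l1 l2b l3b l4 b) Pr A C (inord 2) (inord 3) m34)
  (hp12 : matching_rate (lam l1 l2b l3b l4 b) Pr' A' C' (inord 0) (inord 1) p12)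
  (hp13 : matching_rate (lam l1 l2b l3b l4 b) Pr' A' C' (inord 0) (inord 2) p13)
  (hp24 : matching_rate (lam l1 l2b l3b l4 b) Pr' A' C' (inord 1) (inord 3) p24)
  (hp34 : matching_rate (lam l1 l2b l3b l4 b) Pr' A' C' (inord 2) (inord 3) p34) :
  [/\ m12 <= p12, m34 <= p34, p13 <= m13 & p24 <= m24].
Proof.
(* The coupling is pathwise: of the hypotheses on the rates only their signs are used. *)
have la_ge0 l : 0 <= lam l1 l2b l3b l4 b l.
  by rewrite /lam; case: (val l) => [|[|[|[|?]]]]; rewrite ?addr_ge0 ?ltW.
have coupled := trace_coupling hPh hPhg hPp hrk hPpe.
split.
- apply: (matching_rate_le la_ge0 hPh hPp hreal hreal' hm12 hp12) => t a cg cp wg wp.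
  by case: (coupled t a cg cp wg wp).
- apply: (matching_rate_le la_ge0 hPh hPp hreal hreal' hm34 hp34) => t a cg cp wg wp.
  by case: (coupled t a cg cp wg wp).
- apply: (matching_rate_le la_ge0 hPp hPh hreal' hreal hp13 hm13) => t a cp cg wp wg.
  by case: (coupled t a cg cp wg wp).
- apply: (matching_rate_le la_ge0 hPp hPh hreal' hreal hp24 hm24) => t a cp cg wp wg.
  by case: (coupled t a cg cp wg wp).
Qed.
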